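(* For every non-negative integer $n$, the map $(T,\lambda)\mapsto\sigma(T,\lambda)$ is a bijection from the set of all increasing trees with $n$ branchings onto the set of all set compositions of $[n]=\{1,\ldots,n\}$.
   Context: A (planar rooted) tree is a finite planar rooted tree in which every vertex has exactly one outgoing edge (towards the root; the vertex nearest the root has an outgoing root edge) and at least two incoming edges, ordered from left to right; incoming edges either come from another vertex or are leaves. The trivial tree $\varepsilon$ has no vertex (a single edge). For $m\ge 1$ and trees $T_0,\ldots,T_m$, the wedge $\bigvee(T_0,\ldots,T_m)$ is obtained by joining the roots of $T_0,\ldots,T_m$ (in this left-to-right order) to a new vertex, which receives a new root edge; every non-trivial tree is uniquely such a wedge. A vertex with $m+1$ incoming edges carries $m$ branchings, namely the $m$ pairs of consecutive incoming edges at that vertex; a branching is assigned the vertex carrying it. Let $B(T)$ be the set of branchings of $T$ and $b(T)=|B(T)|$. The left-to-right order $\preceq$ on $B(T)$ is defined recursively: if $T=\bigvee(T_0,\ldots,T_m)$ and $b_1,\ldots,b_m$ are the branchings at the root vertex, from left to right (the root branchings, $b_i$ lying between $T_{i-1}$ and $T_i$), then $b_i\prec b\prec b_{i+1}$ for all $b\in B(T_i)$ (with $b_0$, $b_{m+1}$ omitted), and $B(T_i)$ carries its own order. The natural labelling is the unique order-preserving bijection $([n],\le)\to(B(T),\preceq)$, $n=b(T)$. A standard level function on $T$ is a surjective map $\lambda$ from the set of vertices of $T$ onto $[k]$ for some $k\ge 0$ that is strictly increasing along every path from a leaf to the root; an increasing tree is a pair $(T,\lambda)$ with $\lambda$ a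 standard level function, and the level of a branching is the level of its vertex. A set composition of a finite set $S$ of length $k$ is a tuple $(P_1,\ldots,P_k)$ of pairwise disjoint non-empty subsets with union $S$. For an increasing tree $(T,\lambda)$ with $n$ branchings and $k$ levels, $\sigma(T,\lambda)=(P_1,\ldots,P_k)$ where $P_i$ is the set of natural labels of the branchings of $T$ at level $i$. *)

From mathcomp Require Import all_boot.
Set Implicit Arguments. Unset Strict Implicit. Unset Printing Implicit Defensive.

(* An increasing tree (T, lambda) is represented by the planar rooted tree T
   in which every vertex is decorated by its level lambda(v).
   [ILeaf] is an edge (a leaf, or the trivial tree epsilon);
   [INode k [:: T_0; ...; T_m]] is the wedge \/(T_0,...,T_m) whose new
   (root) vertex has level k. *)
Inductive itree : Type :=
| ILeaf : itree
| INode : nat -> seq itree -> itree.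

Definition root_level (t : itree) : option nat :=
  match t with ILeaf => None | INode k _ => Some k end.

Fixpoint wf_itree (t : itree) : bool :=
  match t with
  | ILeaf => true
  | INode k ch =>
      [&& 1 < size ch,
          all (fun c => if root_level c is Some k' then k' < k else true) ch
        & all wf_itree ch]
  end.

Fixpoint vlevels (t : itree) : seq nat :=
  match t with
  | ILeaf => [::]
  | INode k ch => k :: flatten (map vlevels ch)
  end.

Definition standard_levels (t : itree) : Prop :=
  exists k : nat, forall i : nat, i \in vlevels t <-> (1 <= i <= k).

Definition increasing_tree (t : itree) : Prop :=
  wf_itree t /\ standard_levels t.

Definition nlevels (t : itree) : nat := foldr maxn 0 (vlevels t).

(* The levels of the branchings of T listed in the left-to-right order:
   for T = \/(T_0,...,T_m) with root level k this is
   B(T_0), k, B(T_1), k, ..., k, B(T_m).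
   The j-th entry (0-based) is the level of the branching with natural label j+1. *)
Fixpoint blevels (t : itree) : seq nat :=
  match t with
  | ILeaf => [::]
  | INode k ch =>
      let fix go (l : seq itree) : seq nat :=
        match l with
        | [::] => [::]
        | [:: c] => blevels c
        | c :: l' => blevels c ++ k :: go l'
        end
      in go ch
  end.

Definition nbranchings (t : itree) : nat := size (blevels t).

(* [n] = {1,...,n} is represented by 'I_n, the ordinal j standing for j+1. *)

Definition sigma (n : nat) (t : itree) : seq {set 'I_n} :=
  [seq [set j : 'I_n | nth 0 (blevels t) j == i] | i <- iota 1 (nlevels t)].

Definition set_composition (n : nat) (P : seq {set 'I_n}) : Prop :=
  [/\ all (fun A : {set 'I_n} => A != set0) P,
      pairwise (fun A B : {set 'I_n} => [disjoint A & B]) P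
    & \bigcup_(A <- P) A = [set: 'I_n]].

(* An increasing tree is determined by the word of levels of its branchings,
   read from left to right.  Levels decrease strictly towards the leaves, so the
   root level is the largest letter and occurs exactly at the root branchings:
   cutting the word at its occurrences gives back the words of the subtrees.
   Conversely, cutting any word recursively at its maximum builds a tree with
   that word.  Standard level functions correspond to packed words (whose
   letters are exactly 1..k), and a packed word of length n is a set
   composition of [n] in disguise: its i-th block is the set of positions of
   the letter i. *)

From mathcomp Require Import all_boot.
From Stdlib Require List.

Set Implicit Arguments.
Unset Strict Implicit.
Unset Printing Implicit Defensive.

Fixpoint intercalate (k : nat) (l : seq (seq nat)) : seq nat :=
  match l with
  | [::] => [::]
  | [:: s] => s
  | s :: l' => s ++ k :: intercalate k l'
  end.

Fixpoint split_on (k : nat) (w : seq nat) : seq (seq nat) :=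
  match w with
  | [::] => [:: [::]]
  | x :: w' =>
      let r := split_on k w' in
      if x == k then [::] :: r else (x :: head [::] r) :: behead r
  end.

Section Intercalate.

Variable k : nat.

Lemma intercalate_cons s l : l != [::] ->
  intercalate k (s :: l) = s ++ k :: intercalate k l.
Proof. by case: l. Qed.

Lemma mem_intercalate l x : 1 < size l ->
  (x \in intercalate k l) = (x == k) || (x \in flatten l).
Proof.
elim: l => [|s [|s' l] IH] // _.
rewrite intercalate_cons // mem_cat in_cons /= mem_cat.
case: l IH => [|s'' l] IH; first by rewrite cats0 orbCA.
by rewrite IH //; case: (x \in s); case: (x == k).
Qed.

Lemma split_on_neq0 w : split_on k w != [::].
Proof. by case: w => //= x w; case: ifP. Qed.

Lemma split_onK : cancel (split_on k) (intercalate k).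
Proof.
elim=> //= x w IH; case: eqP => [->|_].
  by rewrite intercalate_cons ?split_on_neq0 // IH.
by case: (split_on k w) (split_on_neq0 w) IH => [|h [|h' t]] // _ <-.
Qed.

Lemma flatten_split_on w : flatten (split_on k w) = [seq x <- w | x != k].
Proof.
elim: w => //= x w <-; case: eqP => //= _.
by case: (split_on k w) (split_on_neq0 w).
Qed.

Lemma split_on_cat s r : k \notin s ->
  split_on k (s ++ r) = (s ++ head [::] (split_on k r)) :: behead (split_on k r).
Proof.
elim: s => [|x s IH] /=; first by case: (split_on k r) (split_on_neq0 r).
by rewrite in_cons negb_or eq_sym => /andP[/negbTE -> /IH ->].
Qed.

Lemma intercalateK l : l != [::] -> all (fun s : seq nat => k \notin s) l ->
  split_on k (intercalate k l) = l.
Proof.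
elim: l => [|s [|s' l] IH] //= _ /andP[ks kl].
  by rewrite -[s]cats0 split_on_cat //= cats0.
by rewrite split_on_cat //= eqxx IH //= cats0.
Qed.

Lemma size_split_on w : k \in w -> 1 < size (split_on k w).
Proof.
elim: w => //= x w IH; rewrite in_cons eq_sym; case: eqP => [_ _|_ /IH].
  by case: (split_on k w) (split_on_neq0 w).
by case: (split_on k w).
Qed.

Lemma mem_split_on w s x : s \in split_on k w -> x \in s -> (x \in w) && (x != k).
Proof.
move=> sw xs; have : x \in flatten (split_on k w) by apply/flattenP; exists s.
by rewrite flatten_split_on mem_filter andbC.
Qed.

Lemma size_split_on_lt w s : k \in w -> s \in split_on k w -> size s < size w.
Proof.
move=> kw sw; have := congr1 size (flatten_split_on w); case/splitPr: sw => l1 l2.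
rewrite flatten_cat size_cat /= size_cat size_filter => E.
apply: leq_ltn_trans (_ : size s <= count (fun x => x != k) w) _.
  by rewrite -E addnCA leq_addr.
rewrite ltn_neqAle count_size andbT -all_count.
by apply/allPn; exists k; rewrite ?eqxx.
Qed.

End Intercalate.

Lemma bigmax_seq_mem (s : seq nat) : s != [::] -> \max_(x <- s) x \in s.
Proof.
elim: s => // y s IH _; rewrite big_cons in_cons.
case: s IH => [|z s] IH; first by rewrite big_nil maxn0 eqxx.
by rewrite /maxn; case: ltnP; rewrite ?eqxx // IH ?orbT.
Qed.

Lemma bigmax_seq_greatest (s : seq nat) k :
  k \in s -> {in s, forall x, x <= k} -> \max_(x <- s) x = k.
Proof.
move=> ks le_k; apply/eqP; rewrite eqn_leq (leq_bigmax_seq k) // andbT.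
by apply/bigmax_leqP_seq => x xs _; apply: le_k.
Qed.

Definition packed_word (k : nat) (w : seq nat) : Prop :=
  forall i, i \in w <-> 0 < i <= k.

Definition composition_of_word (n : nat) (w : seq nat) (k : nat) : seq {set 'I_n} :=
  [seq [set j : 'I_n | nth 0 w j == i] | i <- iota 1 k].

Lemma bigmax_packed_word k w : packed_word k w -> \max_(x <- w) x = k.
Proof.
case: k => [|k] packed_w.
  case: w packed_w => [|x w] packed_w; first by rewrite big_nil.
  by have /(packed_w _) := mem_head x w; rewrite lt0n leqn0 andNb.
apply: bigmax_seq_greatest; first by apply/(packed_w _); rewrite leqnn.
by move=> x /(packed_w _) /andP[].
Qed.

Lemma set_composition_of_word n k w :
  size w = n -> packed_word k w -> set_composition (composition_of_word n w k).
Proof.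
move=> size_w packed_w; split.
- apply/allP => A /mapP[i]; rewrite mem_iota add1n ltnS => i_range ->.
  have i_in : index i w < n by rewrite -size_w index_mem; apply/(packed_w _).
  by apply/set0Pn; exists (Ordinal i_in); rewrite inE nth_index //; apply/(packed_w _).
- rewrite pairwise_map; have := iota_uniq 1 k; rewrite uniq_pairwise.
  apply: sub_pairwise => i i' /= neq_ii'.
  by rewrite disjoints_subset; apply/subsetP => j; rewrite !inE => /eqP->.
- apply/setP => j; rewrite bigcup_seq inE; apply/bigcupP.
  exists [set j' : 'I_n | nth 0 w j' == nth 0 w j]; last by rewrite inE.
  apply/mapP; exists (nth 0 w j) => //; rewrite mem_iota add1n ltnS.
  by apply/(packed_w _); rewrite mem_nth // size_w.
Qed.

Lemma composition_of_word_inj n k1 k2 w1 w2 :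
  size w1 = n -> size w2 = n -> packed_word k1 w1 ->
  composition_of_word n w1 k1 = composition_of_word n w2 k2 -> w1 = w2.
Proof.
move=> size_w1 size_w2 packed_w1 E.
have Ek : k1 = k2 by have := congr1 size E; rewrite !size_map !size_iota.
subst k2; apply: (@eq_from_nth _ 0) => [|j]; first by rewrite size_w1 size_w2.
rewrite size_w1 => lt_j_n; set i := nth 0 w1 j.
have /(packed_w1 _)/andP[i_gt0 le_i_k1] : i \in w1 by rewrite mem_nth ?size_w1.
have lt_i : i.-1 < k1 by rewrite prednK.
have := congr1 (fun P => Ordinal lt_j_n \in nth set0 P i.-1) E.
by rewrite !(nth_map 0) ?size_iota // nth_iota // add1n prednK // !inE eqxx => /esym/eqP.
Qed.

Lemma set_composition_cover n (P : seq {set 'I_n}) (j : 'I_n) :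
  set_composition P -> has (fun A : {set 'I_n} => j \in A) P.
Proof.
case=> _ _ cover; have : j \in \bigcup_(A <- P) A by rewrite cover inE.
by rewrite bigcup_seq => /bigcupP[A AP jA]; apply/hasP; exists A.
Qed.

Lemma set_composition_find n (P : seq {set 'I_n}) (j : 'I_n) i :
  set_composition P -> i < size P ->
  (find (fun A : {set 'I_n} => j \in A) P == i) = (j \in nth set0 P i).
Proof.
move=> compP lt_i; have j_cov := set_composition_cover j compP.
have := nth_find set0 j_cov; have := j_cov; rewrite has_find.
set b := find _ P => lt_b j_in_b.
apply/eqP/idP => [<- //|j_in]; case: (ltngtP b i) => // [lt|gt].
  case: compP => _ /(pairwiseP set0) disj _.
  by rewrite (disjointFr (disj _ _ lt_b lt_i lt) j_in_b) in j_in.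
by rewrite (before_find set0 gt) in j_in.
Qed.

Lemma composition_of_word_surj n (P : seq {set 'I_n}) : set_composition P ->
  exists w,
    [/\ size w = n, packed_word (size P) w & composition_of_word n w (size P) = P].
Proof.
move=> compP; pose block (j : 'I_n) := find (fun A : {set 'I_n} => j \in A) P.
have lt_block j : block j < size P by rewrite -has_find set_composition_cover.
pose w := [seq (block j).+1 | j <- enum 'I_n].
have nth_w (j : 'I_n) : nth 0 w j = (block j).+1.
  by rewrite (nth_map j) ?size_enum_ord ?nth_ord_enum.
exists w; split; first by rewrite size_map size_enum_ord.
- move=> i; split => [/mapP[j _ ->]|/andP[]]; first exact: lt_block.
  case: i => // i _ lt_i.
  have /set0Pn[j j_in] : nth set0 P i != set0.
    by case: compP => /allP nonempty _ _; apply: nonempty; rewrite mem_nth.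
  apply/mapP; exists j; first by rewrite mem_enum.
  by move: j_in; rewrite -(set_composition_find j compP lt_i) => /eqP <-.
- apply: (@eq_from_nth _ set0) => [|i]; first by rewrite size_map size_iota.
  rewrite size_map size_iota => lt_i.
  rewrite (nth_map 0) ?size_iota // nth_iota // add1n.
  by apply/setP => j; rewrite inE nth_w eqSS set_composition_find.
Qed.

Lemma itree_nested_ind (P : itree -> Prop) :
  P ILeaf -> (forall k ch, List.Forall P ch -> P (INode k ch)) -> forall t, P t.
Proof.
move=> PL PN; fix F 1 => -[|k ch]; first exact: PL.
by apply: PN; elim: ch => [|c ch IH]; constructor.
Qed.

Lemma map_inj_Forall (A B : Type) (P : pred A) (f : A -> B) s1 s2 :
  List.Forall (fun x => forall y, P x -> P y -> f x = f y -> x = y) s1 ->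
  all P s1 -> all P s2 -> map f s1 = map f s2 -> s1 = s2.
Proof.
elim: s1 s2 => [|x s1 IH] [|y s2] //= /List.Forall_cons_iff[injx inj1].
by move=> /andP[Px P1] /andP[Py P2] [/injx-> // /(IH _ inj1)->].
Qed.

Lemma blevels_node k ch : blevels (INode k ch) = intercalate k (map blevels ch).
Proof. by elim: ch => [|c [|c' l] IH] //; move: IH => /= <-. Qed.

Lemma vlevels_le_head t :
  wf_itree t -> {in vlevels t, forall x, x <= head 0 (vlevels t)}.
Proof.
elim/itree_nested_ind: t => [|k ch IH] //= /and3P[_ ch_lt ch_wf] x.
rewrite in_cons => /predU1P[-> //|].
elim: ch IH ch_lt ch_wf => [|c ch IHch] //= /List.Forall_cons_iff[IHc IH].
move=> /andP[c_lt ch_lt] /andP[wf_c ch_wf].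
rewrite mem_cat => /orP[xc|]; last exact: IHch.
case: c IHc c_lt wf_c xc => [|k' ch'] //= IHc lt_k' wf_c xc.
exact: leq_trans (IHc wf_c x xc) (ltnW lt_k').
Qed.

Lemma blevels_vlevels t : wf_itree t -> blevels t =i vlevels t.
Proof.
elim/itree_nested_ind: t => [|k ch IH] // /and3P[sz _ ch_wf] x.
rewrite blevels_node mem_intercalate ?size_map // in_cons; congr (_ || _).
elim: ch IH ch_wf {sz} => [|c ch IHch] //= /List.Forall_cons_iff[IHc IH].
move=> /andP[wf_c ch_wf].
by rewrite !mem_cat IHc // IHch.
Qed.

Lemma root_level_notin_children k ch :
  wf_itree (INode k ch) -> all (fun c => k \notin blevels c) ch.
Proof.
case/and3P => _; elim: ch => // c ch IH /andP[c_lt ch_lt] /andP[wf_c ch_wf].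
rewrite /= IH // andbT (blevels_vlevels wf_c); apply/negP => kc.
have := vlevels_le_head wf_c kc.
by case: c c_lt {wf_c} kc => [|k' ch'] //= lt_k' _; rewrite leqNgt lt_k'.
Qed.

Lemma split_on_blevels k ch :
  wf_itree (INode k ch) -> split_on k (blevels (INode k ch)) = map blevels ch.
Proof.
move=> wf; rewrite blevels_node intercalateK ?all_map ?root_level_notin_children //.
by case/and3P: wf; case: ch.
Qed.

Lemma root_level_blevels t : wf_itree t ->
  root_level t = if blevels t is [::] then None else Some (\max_(x <- blevels t) x).
Proof.
case: t => [|k ch] // wf.
have k_in : k \in blevels (INode k ch).
  by rewrite blevels_node mem_intercalate ?size_map ?eqxx //; case/and3P: wf.
have -> : \max_(x <- blevels (INode k ch)) x = k.
  apply: bigmax_seq_greatest k_in _ => x.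
  by rewrite (blevels_vlevels wf) => /(vlevels_le_head wf).
by case: (blevels _) k_in.
Qed.

Lemma blevels_inj t1 t2 :
  wf_itree t1 -> wf_itree t2 -> blevels t1 = blevels t2 -> t1 = t2.
Proof.
elim/itree_nested_ind: t1 t2 => [|k ch IH] t2 wf1 wf2 E;
  have := root_level_blevels wf2; rewrite -E -(root_level_blevels wf1);
  case: t2 wf2 E => [|k2 ch2] // wf2 E /= [Ek]; subst k2.
congr INode; apply: map_inj_Forall IH _ _ _; [by case/and3P: wf1|by case/and3P: wf2|].
by rewrite -(split_on_blevels wf1) -(split_on_blevels wf2) E.
Qed.

(* [fuel] only ensures termination: any [fuel > size w] builds the whole tree. *)
Fixpoint itree_of_blevels (fuel : nat) (w : seq nat) : itree :=
  match fuel, w with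
  | 0, _ | _, [::] => ILeaf
  | f.+1, _ =>
      let k := \max_(x <- w) x in INode k (map (itree_of_blevels f) (split_on k w))
  end.

Lemma itree_of_blevelsK f w : size w < f ->
  wf_itree (itree_of_blevels f w) /\ blevels (itree_of_blevels f w) = w.
Proof.
elim: f w => [|f IH] [|x w'] // lt_w_f; set w := x :: w' in lt_w_f *.
set k := \max_(y <- w) y.
have -> : itree_of_blevels f.+1 w =
  INode k (map (itree_of_blevels f) (split_on k w)) by [].
have k_in : k \in w by apply: bigmax_seq_mem.
have {}IH s : s \in split_on k w ->
  wf_itree (itree_of_blevels f s) /\ blevels (itree_of_blevels f s) = s.
  by move=> sw; apply: IH; apply: leq_trans (size_split_on_lt k_in sw) lt_w_f.
split; last first.
  rewrite blevels_node -[in RHS](split_onK k w) -map_comp; congr intercalate.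
  by rewrite -[RHS]map_id; apply/eq_in_map => s /IH[].
apply/and3P; split; rewrite ?size_map ?size_split_on // all_map; apply/allP => s sw /=.
  have [wf_s bl_s] := IH s sw; rewrite (root_level_blevels wf_s) bl_s.
  case: s sw {wf_s bl_s} => [|y s] // sw.
  by have /andP[x_in x_neq] := mem_split_on sw (bigmax_seq_mem (isT : y :: s != [::]));
    rewrite ltn_neqAle x_neq /=; apply: leq_bigmax_seq.
by case: (IH s sw).
Qed.

Lemma nlevels_packed t k : packed_word k (vlevels t) -> nlevels t = k.
Proof. by rewrite /nlevels foldrE; apply: bigmax_packed_word. Qed.

Lemma packed_blevels t :
  increasing_tree t -> packed_word (nlevels t) (blevels t).
Proof.
case=> wf_t [k packed_t] i; rewrite (nlevels_packed packed_t) (blevels_vlevels wf_t).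
exact: packed_t.
Qed.

Theorem theorem1p1 (n : nat) :
  (* sigma maps increasing trees with n branchings to set compositions of [n] *)
  (forall t : itree, increasing_tree t -> nbranchings t = n ->
     set_composition (sigma n t)) /\
  (* injective *)
  (forall t1 t2 : itree,
     increasing_tree t1 -> nbranchings t1 = n ->
     increasing_tree t2 -> nbranchings t2 = n ->
     sigma n t1 = sigma n t2 -> t1 = t2) /\
  (* surjective *)
  (forall P : seq {set 'I_n}, set_composition P ->
     exists t : itree,
       [/\ increasing_tree t, nbranchings t = n & sigma n t = P]).
Proof.
split; [|split].
- move=> t inc_t <-; exact: set_composition_of_word (packed_blevels inc_t).
- move=> t1 t2 inc_t1 size_t1 inc_t2 size_t2 E.
  apply: blevels_inj inc_t1.1 inc_t2.1 _.
  exact: composition_of_word_inj size_t1 size_t2 (packed_blevels inc_t1) E.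
- move=> P compP; have [w [size_w packed_w <-]] := composition_of_word_surj compP.
  have [wf_t bl_t] := itree_of_blevelsK (ltnSn (size w)).
  set t := itree_of_blevels _ w in wf_t bl_t.
  have packed_t : packed_word (size P) (vlevels t).
    by move=> i; rewrite -(blevels_vlevels wf_t) bl_t.
  exists t; split; [by split; last exists (size P) | by rewrite -size_w -bl_t |].
  by rewrite /sigma (nlevels_packed packed_t) bl_t.
Qed.
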